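(* Let $n\ge4$. The set $\mathbb{CPI}^n_S$ of closed path independent graphs in $\mathbb G^n_S$ is an $n$-dimensional linear subspace of $\mathbb G^n_S\cong\mathbb R^{\binom n2}$, and $\{\mathbf B^n_j\}_{j=1}^n$ is a basis of it, where $\mathbf B^n_j$ is the vector with $d_{j,k}=1$ for all $k\ne j$ and all other entries $0$.
   Context: $\mathbb G^n_S$ is the space of complete undirected weighted graphs without loops on $V_1,\dots,V_n$ with edge weights $d_{i,j}=d_{j,i}$, identified with $\mathbb R^{\binom n2}$ via the entries $d_{i,j}$, $i<j$. A closed path through a set $D$ ($|D|\ge3$) is a closed path visiting each $V_j$, $j\in D$, exactly once and no other vertex; its length is the sum of its edge weights. A graph is closed path independent iff for every such $D$ all closed paths through $D$ have the same length. *)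

From HB Require Import structures.
From mathcomp Require Import all_boot all_order all_algebra.
From mathcomp Require Import reals.
Set Implicit Arguments. Unset Strict Implicit. Unset Printing Implicit Defensive.
Import Order.TTheory GRing.Theory Num.Theory.
Local Open Scope ring_scope.

(* Vertices V_1..V_n are 'I_n.  Edges of the complete loopless graph are the
   pairs (i, j) with i < j; there are binom(n,2) of them. *)
Definition edge (n : nat) := {x : 'I_n * 'I_n | (x.1 < x.2)%N}.

Definition graphS (R : realType) (n : nat) := {ffun edge n -> R^o}.

(* weight d_{i,j} = d_{j,i} of the edge between i and j (0 if i = j, unused) *)
Definition wt (R : realType) (n : nat) (d : graphS R n) (i j : 'I_n) : R :=
  if @insub _ (fun x : 'I_n * 'I_n => (x.1 < x.2)%N) (edge n)
       (if (i < j)%N then (i, j) else (j, i)) is Some e then d e else 0.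

(* length of the closed path visiting s_0, s_1, ..., s_{k-1}, s_0 *)
Definition cpath_len (R : realType) (n : nat) (d : graphS R n) (s : seq 'I_n) : R :=
  \sum_(p <- zip s (rot 1 s)) wt d p.1 p.2.

Definition closed_path_through (n : nat) (D : {set 'I_n}) (s : seq 'I_n) :=
  uniq s /\ s =i D.

Definition closed_path_independent (R : realType) (n : nat) (d : graphS R n) :=
  forall D : {set 'I_n}, (3 <= #|D|)%N ->
  forall s t : seq 'I_n, closed_path_through D s -> closed_path_through D t ->
  cpath_len d s = cpath_len d t.

Definition Bvec (R : realType) (n : nat) (j : 'I_n) : graphS R n :=
  [ffun e : edge n => if ((val e).1 == j) || ((val e).2 == j) then 1 else 0].

From HB Require Import structures.
From mathcomp Require Import all_boot all_order all_algebra.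
From mathcomp Require Import reals.
From mathcomp Require Import lra zify.
Set Implicit Arguments. Unset Strict Implicit. Unset Printing Implicit Defensive.
Import Order.TTheory GRing.Theory Num.Theory.
Local Open Scope ring_scope.

(* Closed path independent graphs are exactly the "potential" graphs.

   Call a : 'I_n -> R a potential of the weighted graph d when every edge
   weight splits as d_{i,j} = a_i + a_j.  The theorem follows from three facts:
   - If d has a potential a, every closed path through D has length
     2 * sum_{x in D} a_x (each vertex of D is the endpoint of exactly two
     edges of the path), so d is closed path independent.
   - Conversely, if d is closed path independent then, comparing the two
     4-cycles i-k-l-j and i-l-k-j, the "apex value"
     (d_{i,j} + d_{i,k} - d_{j,k}) / 2 does not depend on the choice of the
     two other vertices j, k; this common value is a potential of d.
   - d = \sum_j a_j B_j exactly when a is a potential of d, and for n >= 3 a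
     potential is unique (it is recovered as the apex value), so the B_j are
     linearly independent. *)

Section ClosedPathIndependence.
Variables (R : realType) (n : nat).
Implicit Types (d : graphS R n) (a : 'I_n -> R) (i j k l : 'I_n).

Lemma wt_sym d i j : wt d i j = wt d j i.
Proof.
rewrite /wt; case: ltngtP => // eq_ij.
by have -> : i = j by apply: val_inj.
Qed.

Lemma wt_edge d (e : edge n) : wt d (val e).1 (val e).2 = d e.
Proof.
case: e => [[x y] lt_xy]; rewrite /wt /= lt_xy insubT /=.
by congr (d _); apply: val_inj.
Qed.

Lemma exists_third_vertex i j : (3 <= n)%N -> exists k, (k != i) && (k != j).
Proof.
move=> le3n; have : (0 < #|~: [set i; j]|)%N.
  by have := cardsC [set i; j]; rewrite cards2 card_ord; case: (i != j) => /=; lia.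
by case/card_gt0P => k; rewrite !inE negb_or => ?; exists k.
Qed.

Definition potential d a := forall e : edge n, d e = a (val e).1 + a (val e).2.

Lemma wt_potential d a i j : potential d a -> i != j -> wt d i j = a i + a j.
Proof.
move=> pot_a neq_ij; wlog lt_ij : i j neq_ij / (i < j)%N => [sym|].
  case: (ltngtP i j) => [lt_ij|lt_ji|eq_ij]; first exact: sym.
    by rewrite wt_sym sym 1?addrC // eq_sym.
  by case/eqP: neq_ij; apply: val_inj.
by rewrite -(pot_a (exist _ (i, j) lt_ij)) -wt_edge.
Qed.

Lemma potential_sum_Bvec a : potential (\sum_j a j *: Bvec R j) a.
Proof.
move=> e; rewrite sum_ffunE.
have neq_e : (val e).1 != (val e).2 by case: e => [[x y] /= lt_xy]; rewrite neq_ltn lt_xy.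
rewrite (bigD1 (val e).1) //= (bigD1 (val e).2) 1?eq_sym //= big1 ?addr0.
  by rewrite !ffunE !eqxx orbT /GRing.scale /= !mulr1.
move=> j /andP[ne_j1 ne_j2]; rewrite !ffunE.
by rewrite eq_sym (negbTE ne_j1) eq_sym (negbTE ne_j2) scaler0.
Qed.

Lemma potential_eq_sum_Bvec d a : potential d a -> d = \sum_j a j *: Bvec R j.
Proof. by move=> pot_a; apply/ffunP => e; rewrite pot_a -potential_sum_Bvec. Qed.

Definition apex d i j k : R := (wt d i j + wt d i k - wt d j k) / 2%:R.

Lemma apex_sym d i j k : apex d i j k = apex d i k j.
Proof. by rewrite /apex (wt_sym d j k) [wt d i j + _]addrC. Qed.

Lemma potential_apex d a i j k : potential d a ->
  i != j -> i != k -> j != k -> apex d i j k = a i.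
Proof.
by move=> pot_a ij ik jk; rewrite /apex !(wt_potential pot_a) //; lra.
Qed.

Lemma potential_unique d a b : (3 <= n)%N ->
  potential d a -> potential d b -> a =1 b.
Proof.
move=> le3n pot_a pot_b i; have [j /andP[ji _]] := exists_third_vertex i i le3n.
have [k /andP[ki kj]] := exists_third_vertex i j le3n.
rewrite -(potential_apex pot_a (_ : i != j) (_ : i != k) (_ : j != k)) 1?eq_sym //.
by rewrite (potential_apex pot_b) 1?eq_sym.
Qed.

Lemma sum_closed_walk (V : nmodType) (T : eqType) (f : T -> V) (s : seq T) :
  \sum_(p <- zip s (rot 1 s)) (f p.1 + f p.2) = (\sum_(x <- s) f x) *+ 2.
Proof.
rewrite big_split /= -(big_map fst predT f) -(big_map snd predT f).
rewrite -/(unzip1 _) -/(unzip2 _) unzip1_zip ?unzip2_zip ?size_rot //.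
have rot_s : perm_eq (rot 1 s) s by rewrite perm_rot.
by rewrite (perm_big _ rot_s) mulr2n.
Qed.

(* Each step of the walk y, l_1, ..., l_m, z joins two distinct vertices when
   y :: l is duplicate-free and z differs from the l_i (and from y if m = 0);
   for z = y this is the closed walk around y :: l. *)
Lemma walk_edges_proper (T : eqType) (y z : T) (l : seq T) :
  uniq (y :: l) -> z \notin l -> (l = [::] -> y != z) ->
  all (fun p => p.1 != p.2) (zip (y :: l) (rcons l z)).
Proof.
elim: l y => [|w l IHl] y; first by move=> _ _ /(_ erefl); rewrite /= andbT.
rewrite /= !inE !negb_or => /andP[/andP[yw _] /andP[wl ul]] /andP[zw zl] _.
by rewrite yw; apply: IHl => //=; [rewrite wl | move=> _; rewrite eq_sym].
Qed.

Lemma cpath_len_potential d a (D : {set 'I_n}) (s : seq 'I_n) :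
  potential d a -> (3 <= #|D|)%N -> closed_path_through D s ->
  cpath_len d s = (\sum_(x in D) a x) *+ 2.
Proof.
move=> pot_a le3D [uniq_s s_D].
have size_s : size s = #|D| by rewrite -(card_uniqP uniq_s); apply: eq_card.
have perm_s : perm_eq s (enum D).
  by apply: uniq_perm => // [|x]; [exact: enum_uniq | rewrite mem_enum s_D].
rewrite -big_enum -(perm_big _ perm_s) -sum_closed_walk /cpath_len.
apply: eq_big_seq => p p_edge; apply: wt_potential => //.
case: s uniq_s size_s p_edge {s_D perm_s} => [|x s] uniq_s size_s.
  by rewrite -size_s in le3D.
rewrite rot1_cons => p_edge; apply: (allP (walk_edges_proper uniq_s _ _)) p_edge.
  by case/andP: uniq_s.
by move=> s0; move: le3D; rewrite -size_s s0.
Qed.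

Lemma potential_cpi d a : potential d a -> closed_path_independent d.
Proof.
move=> pot_a D le3D s t path_s path_t.
by rewrite (cpath_len_potential pot_a le3D path_s) (cpath_len_potential pot_a le3D path_t).
Qed.

(* Comparing the lengths of the 4-cycles i-k-l-j and i-l-k-j. *)
Lemma cpi_four_cycle d i j k l : closed_path_independent d ->
  i != j -> i != k -> i != l -> j != k -> j != l -> k != l ->
  wt d i k + wt d l j = wt d i l + wt d k j.
Proof.
move=> cpi_d ij ik il jk jl kl.
pose D := [set x in [:: i; k; l; j]].
have [kj lj lk] : [/\ k != j, l != j & l != k] by split; rewrite eq_sym.
have uniq1 : uniq [:: i; k; l; j] by rewrite /= !inE !negb_or ik il ij kl kj lj.
have uniq2 : uniq [:: i; l; k; j] by rewrite /= !inE !negb_or ik il ij lk kj lj.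
have path1 : closed_path_through D [:: i; k; l; j].
  by apply: conj => [|x]; rewrite ?inE.
have path2 : closed_path_through D [:: i; l; k; j].
  apply: conj => [//|x]; rewrite !inE.
  by case: (x == i); case: (x == k); case: (x == l); case: (x == j).
have le3D : (3 <= #|D|)%N by rewrite cardsE (card_uniqP uniq1).
have := cpi_d D le3D _ _ path1 path2; rewrite /cpath_len /= !big_cons big_nil.
by rewrite /= (wt_sym d l k); lra.
Qed.

(* In a closed path independent graph the apex value at i does not depend on
   the choice of the other two vertices: first change one leg, then both. *)
Lemma apex_change_leg d i j k l : closed_path_independent d ->
  i != j -> i != k -> j != k -> i != l -> j != l -> apex d i j k = apex d i j l.
Proof.
move=> cpi_d ij ik jk il jl; have [-> //|kl] := eqVneq k l.
have := cpi_four_cycle cpi_d ij ik il jk jl kl.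
by rewrite /apex (wt_sym d l j) (wt_sym d k j) => four; congr (_ / _); lra.
Qed.

Lemma apex_indep d i j k p q : closed_path_independent d ->
  i != j -> i != k -> j != k -> i != p -> i != q -> p != q ->
  apex d i j k = apex d i p q.
Proof.
move=> cpi_d ij ik jk ip iq pq; have [eq_qj | qj] := eqVneq q j.
  subst q; by rewrite [RHS]apex_sym (apex_change_leg cpi_d ij ik jk ip) // eq_sym.
rewrite (apex_change_leg cpi_d ij ik jk iq (_ : j != q)) 1?eq_sym //.
rewrite apex_sym (apex_change_leg cpi_d iq ij qj ip (_ : q != p)) 1?eq_sym //.
exact: apex_sym.
Qed.

Definition apex_potential d i : R :=
  if [pick p : 'I_n * 'I_n | [&& p.1 != i, p.2 != i & p.1 != p.2]] is Some p
  then apex d i p.1 p.2 else 0.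

Lemma apex_potentialE d i j k : (3 <= n)%N -> closed_path_independent d ->
  i != j -> i != k -> j != k -> apex_potential d i = apex d i j k.
Proof.
move=> le3n cpi_d ij ik jk; rewrite /apex_potential; case: pickP => [p|none].
  case/and3P=> p1i p2i p12.
  by rewrite (apex_indep cpi_d ij ik jk (_ : i != p.1) (_ : i != p.2) p12) // eq_sym.
have [l /andP[li lj]] := exists_third_vertex i j le3n.
by have := none (j, l); rewrite /= eq_sym ij li eq_sym lj.
Qed.

(* The two apex values at the ends of an edge i j, taken with a common third
   vertex k, add up to d_{i,j}. *)
Lemma cpi_potential d : (3 <= n)%N -> closed_path_independent d ->
  potential d (apex_potential d).
Proof.
move=> le3n cpi_d [[i j] lt_ij] /=; have ij : i != j by rewrite neq_ltn lt_ij.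
have [k /andP[ki kj]] := exists_third_vertex i j le3n.
rewrite (apex_potentialE le3n cpi_d ij (_ : i != k) (_ : j != k)) 1?eq_sym //.
rewrite (apex_potentialE le3n cpi_d (_ : j != i) (_ : j != k) (_ : i != k)) 1?eq_sym //.
rewrite -(wt_edge d (exist _ (i, j) lt_ij)) /apex /=.
by rewrite (wt_sym d j i) (wt_sym d j k); lra.
Qed.

Lemma cpi_iff_potential d : (3 <= n)%N ->
  closed_path_independent d <-> exists a, potential d a.
Proof.
move=> le3n; split; first by move=> cpi_d; exists (apex_potential d); apply: cpi_potential.
by case=> a; apply: potential_cpi.
Qed.

(* The family B_1, ..., B_n, also seen as an n-tuple for coordinates. *)
Definition Bfamily : seq (graphS R n) := [seq Bvec R j | j <- enum 'I_n].

Definition Btuple : n.-tuple (graphS R n) := map_tuple (@Bvec R n) (ord_tuple n).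

Lemma Btuple_nth i : (Btuple : seq _)`_i = Bvec R i.
Proof. by rewrite /= (nth_map i) ?size_enum_ord // (nth_ord_enum i i). Qed.

Lemma mem_span_Bfamily d : d \in <<Bfamily>>%VS <-> exists a, potential d a.
Proof.
split=> [|[a /potential_eq_sum_Bvec ->]].
  change Bfamily with (Btuple : seq _).
  move/coord_span => ->; exists (fun i => coord Btuple i d).
  under eq_bigr do rewrite Btuple_nth; exact: potential_sum_Bvec.
apply: memv_suml => j _; apply/memvZ/memv_span.
by apply: map_f; rewrite mem_enum.
Qed.

(* For n >= 3 the B_j are linearly independent: a vanishing combination is a
   potential of the zero graph, which must be the zero potential. *)
Lemma free_Bfamily : (3 <= n)%N -> free Bfamily.
Proof.
move=> le3n; change Bfamily with (Btuple : seq _).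
apply/freeP => c; under eq_bigr do rewrite Btuple_nth; move=> sum0 i.
have pot0 : potential 0 (fun _ => 0) by move=> e; rewrite ffunE addr0.
by apply: (potential_unique le3n _ pot0); rewrite -sum0; exact: potential_sum_Bvec.
Qed.

End ClosedPathIndependence.

Theorem theorem9 (R : realType) (n : nat) : (4 <= n)%N ->
  exists U : {vspace graphS R n},
    (forall d : graphS R n, d \in U <-> closed_path_independent d) /\
    \dim U = n /\
    basis_of U [seq Bvec R j | j <- enum 'I_n].
Proof.
move=> le4n; have le3n : (3 <= n)%N by apply: ltnW.
have free_B := free_Bfamily R le3n.
exists <<Bfamily R n>>%VS; split; [|split].
- by move=> d; rewrite mem_span_Bfamily cpi_iff_potential.
- by rewrite (eqP free_B) size_map size_enum_ord.
- by rewrite /basis_of eqxx free_B.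
Qed.
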